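(* Fix $N$, the graph $\mathcal G$, the vectors $C_1,\dots,C_N$, the attack bound $s$, and the noise bounds $b_w,b_v$. Then the following are equivalent: (i) there exists $\varepsilon>0$ such that for every $A\in\mathbb R^{n\times n}$ with $\|A\|\in[1,1+\varepsilon)$ there exist reals $\beta>0$, $\eta_0>0$ and an integer $L>\frac{\ln\|A\|}{\ln\gamma^{-1}}$ with $\eta_0(1-F(\eta_0))\ge q_0$ (where $F$ and $q_0$ are computed from these $A,\beta,L,\eta_0$); (ii) $\lambda_0>s$.
   Context: $C_i\in\mathbb R^{1\times n}$ with $\|C_i\|=1$, $i\in\mathcal V=\{1,\dots,N\}$; $\|\cdot\|$ is the Euclidean norm / induced 2-norm. $\mathcal G$ is an undirected connected graph on $\mathcal V$ without self-loops with Laplacian $\mathcal L$ (degree matrix minus adjacency matrix), whose second smallest and largest eigenvalues are $\lambda_2(\mathcal L),\lambda_{\max}(\mathcal L)$. $s$ is a nonnegative integer (upper bound on the number of attacked sensors), $b_w,b_v\ge0$. Notation: $\lambda_0=\min_{\mathcal J\subset\mathcal V,|\mathcal J|=N-s}\lambda_{\min}(\sum_{i\in\mathcal J}C_i^TC_i)$; $\gamma=\frac{\lambda_{\max}(\mathcal L)-\lambda_2(\mathcal L)}{\lambda_{\max}(\mathcal L)+\lambda_2(\mathcal L)}$; $p_0=\frac{\sqrt N\beta\gamma^L}{1-\|A\|\gamma^L}$; $k^*(\rho)=\min\{1,\frac{\beta}{\|A\|(p_0+\rho)+b_w+b_v}\}$; $F(\rho)=\|A\|(1-\frac{k^*(\rho)}{N}\lambda_0)$;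 $q_0=\frac{N-s}{N}(b_w+b_v+\|A\|p_0)+b_w+\frac{s\beta}{N}$. *)

From HB Require Import structures.
From mathcomp Require Import all_boot all_order all_algebra.
From mathcomp Require Import all_classical all_reals.
From mathcomp Require Import exp.
Set Implicit Arguments. Unset Strict Implicit. Unset Printing Implicit Defensive.
Import Order.TTheory GRing.Theory Num.Theory.
Local Open Scope ring_scope.
Local Open Scope classical_set_scope.

Section Defs.
Variable R : realType.

Definition enorm (m k : nat) (x : 'M[R]_(m, k)) : R :=
  Num.sqrt (\sum_i \sum_j x i j ^+ 2).

Definition opnorm (n : nat) (A : 'M[R]_n) : R :=
  sup [set enorm (A *m x) | x in [set x : 'cV[R]_n | enorm x = 1]].

(* Eigenvalues with multiplicity, sorted increasingly: the (unique) sorted list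
   r with char_poly M = prod_(x <- r) ('X - x).  Exists for real symmetric M. *)
Definition spectrum (n : nat) (M : 'M[R]_n) : seq R :=
  xget [::] [set r : seq R | sorted <=%R r /\
                              char_poly M = \prod_(x <- r) ('X - x%:P)].

Definition lambda_min (n : nat) (M : 'M[R]_n) : R := head 0 (spectrum M).
Definition lambda_max (n : nat) (M : 'M[R]_n) : R := last 0 (spectrum M).
Definition lambda2 (n : nat) (M : 'M[R]_n) : R := nth 0 (spectrum M) 1.

Definition undirected_graph (N : nat) (adj : rel 'I_N) : Prop :=
  (forall i j, adj i j = adj j i) /\ (forall i, ~~ adj i i).
Definition connected_graph (N : nat) (adj : rel 'I_N) : Prop :=
  forall i j, connect adj i j.

Definition degree (N : nat) (adj : rel 'I_N) (i : 'I_N) : nat :=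
  #|[set j | adj i j]|.

Definition laplacian (N : nat) (adj : rel 'I_N) : 'M[R]_N :=
  \matrix_(i, j) ((if i == j then (degree adj i)%:R else 0) - (adj i j)%:R).

Definition lambda0 (n N s : nat) (C : 'I_N -> 'rV[R]_n) : R :=
  inf [set lambda_min (\sum_(i in J) ((C i)^T *m C i))
      | J in [set J : {set 'I_N} | #|J| = (N - s)%N]].

Definition gammaL (N : nat) (adj : rel 'I_N) : R :=
  (lambda_max (laplacian adj) - lambda2 (laplacian adj)) /
  (lambda_max (laplacian adj) + lambda2 (laplacian adj)).

Definition p0 (N : nat) (g normA beta : R) (L : nat) : R :=
  Num.sqrt N%:R * beta * g ^+ L / (1 - normA * g ^+ L).

Definition kstar (N : nat) (g normA beta : R) (L : nat) (bw bv rho : R) : R :=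
  Num.min 1 (beta / (normA * (p0 N g normA beta L + rho) + bw + bv)).

Definition Ffun (N : nat) (g normA beta : R) (L : nat) (bw bv lam0 rho : R) : R :=
  normA * (1 - kstar N g normA beta L bw bv rho / N%:R * lam0).

Definition q0 (N s : nat) (g normA beta : R) (L : nat) (bw bv : R) : R :=
  (N%:R - s%:R) / N%:R * (bw + bv + normA * p0 N g normA beta L) + bw
  + s%:R * beta / N%:R.

End Defs.

From HB Require Import structures.
From mathcomp Require Import all_boot all_order all_algebra.
From mathcomp Require Import all_classical all_reals.
From mathcomp Require Import exp.
From mathcomp Require Import ring lra.
Set Implicit Arguments.
Unset Strict Implicit.
Unset Printing Implicit Defensive.

Import Order.TTheory GRing.Theory Num.Theory.
Local Open Scope ring_scope.

(* If lambda_0 <= s, then k*(eta) <= beta / (||A|| (p_0 + eta) + b_w + b_v) gives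
   ||A|| eta k* lambda_0 <= beta s, so eta (1 - F(eta)) equals
   eta (1 - ||A||) + ||A|| eta k* lambda_0 / N < s beta / N <= q_0 as soon as
   ||A|| > 1; the scalar matrices A = a I with a slightly above 1 are such.
   Conversely, with t = (lambda_0 - s) / N > 0, choose eta so that
   ||A|| (p_0 + eta) + b_w + b_v = beta, i.e. k*(eta) = 1.  Then
     eta (1 - F(eta)) - q_0
   = eta (1 - ||A||) + beta t - (||A|| p_0 + b_w + b_v)(1 + t) - b_w,
   which is nonnegative once ||A|| - 1 <= t / 2, beta is large and L is so large
   that ||A|| p_0 <= beta t / (4 (1 + t)).  This needs gamma < 1, i.e. lambda_2 > 0
   for the Laplacian of a connected graph: column operations give
   char_poly L = D X and char_poly (L + J) = D (X - N) for the all-ones J, and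
   L + J is positive definite, so D(0) <> 0 and 0 is a simple eigenvalue. *)

Section AddColumns.
Variables (R : comNzRingType) (m : nat).
Implicit Types (A : 'M[R]_m.+1) (c : R).

Definition add_cols_to0 : 'M[R]_m.+1 :=
  \matrix_(i, j) (if j == ord0 then 1 else (i == j)%:R).

Definition sub_col0 : 'M[R]_m.+1 :=
  \matrix_(i, j) (if (i == ord0) && (j != ord0) then -1 else (i == j)%:R).

Definition scale_col0 c : 'M[R]_m.+1 := diag_mx (\row_j (if j == ord0 then c else 1)).

Lemma gt_ord_neq0 {i j : 'I_m.+1} : (i < j)%N -> j != ord0.
Proof. by rewrite -val_eqE /=; case: (nat_of_ord j). Qed.

Lemma det_add_cols_to0 : \det add_cols_to0 = 1.
Proof.
rewrite det_trig; last first.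
  apply/is_trig_mxP => i j lt_ij; rewrite mxE (negbTE (gt_ord_neq0 lt_ij)).
  by rewrite -val_eqE (ltn_eqF lt_ij).
by rewrite big1 // => i _; rewrite mxE eqxx; case: ifP.
Qed.

Lemma det_sub_col0 : \det sub_col0 = 1.
Proof.
rewrite -det_tr det_trig; last first.
  apply/is_trig_mxP => i j lt_ij; rewrite !mxE (negbTE (gt_ord_neq0 lt_ij)) /=.
  by rewrite -val_eqE /= (gtn_eqF lt_ij).
by rewrite big1 // => i _; rewrite !mxE eqxx; case: (i == ord0); rewrite ?andbF.
Qed.

Lemma det_scale_col0 A c : \det (A *m scale_col0 c) = \det A * c.
Proof.
rewrite det_mulmx det_diag (bigD1 ord0) //= big1 ?mxE ?eqxx ?mulr1 // => j.
by rewrite mxE => /negbTE ->.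
Qed.

Lemma mul_add_cols_to0 A i j :
  (A *m add_cols_to0) i j = if j == ord0 then \sum_k A i k else A i j.
Proof.
rewrite mxE; case: ifP => [/eqP ->|j0].
  by apply: eq_bigr => k _; rewrite mxE eqxx mulr1.
rewrite (bigD1 j) //= !mxE j0 eqxx mulr1 big1 ?addr0 // => k /negbTE kj.
by rewrite mxE j0 kj mulr0.
Qed.

Lemma mul_sub_col0 A i j :
  (A *m sub_col0) i j = if j == ord0 then A i ord0 else A i j - A i ord0.
Proof.
rewrite mxE (bigD1 ord0) //= mxE eqxx /=; case: eqP => [->|/eqP j0].
  by rewrite mulr1 big1 ?addr0 // => k /negbTE k0; rewrite mxE k0 mulr0.
rewrite (bigD1 j) //= !mxE j0 eqxx (negbTE j0) big1 ?addr0.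
  by rewrite mulr1 mulrN1 addrC.
by move=> k /andP [/negbTE k0 /negbTE kj]; rewrite mxE k0 kj mulr0.
Qed.

Lemma mul_scale_col0 A c i j :
  (A *m scale_col0 c) i j = A i j * (if j == ord0 then c else 1).
Proof. by rewrite mul_mx_diag !mxE. Qed.

End AddColumns.

Lemma char_poly_row_sums0 (R : comNzRingType) (m : nat) (M : 'M[R]_m.+1) :
  (forall i, \sum_j M i j = 0) ->
  exists D : {poly R},
    char_poly M = D * 'X /\ char_poly (M + const_mx 1) = D * ('X - m.+1%:R%:P).
Proof.
move=> rowM; set P := char_poly_mx M.
set Q : 'M[{poly R}]_m.+1 := \matrix_(i, j) (if j == ord0 then 1 else P i j).
have rowP i : \sum_j P i j = 'X.
  under eq_bigr do rewrite !mxE.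
  rewrite sumrB -rmorph_sum rowM subr0 (bigD1 i) //= eqxx big1 ?addr0 // => j.
  by rewrite eq_sym => /negbTE ->.
exists (\det Q); split.
  rewrite -det_scale_col0 /char_poly -[\det P]mulr1.
  rewrite -(det_add_cols_to0 {poly R} m) -det_mulmx.
  congr (\det _); apply/matrixP => i j.
  rewrite mul_add_cols_to0 mul_scale_col0 [Q i j]mxE.
  by case: ifP; rewrite ?rowP ?mul1r ?mulr1.
have PJ : char_poly_mx (M + const_mx 1) = P - const_mx 1.
  by apply/matrixP => i j; rewrite !mxE rmorphD /= opprD addrA.
rewrite -[\det Q]mulr1 -(det_sub_col0 {poly R} m) -det_mulmx -det_scale_col0.
rewrite /char_poly -[\det _]mulr1 -(det_add_cols_to0 {poly R} m) -det_mulmx PJ.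
congr (\det _); apply/matrixP => i j.
rewrite mul_add_cols_to0 mul_scale_col0 mul_sub_col0 ![Q _ _]mxE eqxx [(P - _) i j]mxE.
case: ifP => _; last by rewrite !mxE mulr1.
under eq_bigr do rewrite mxE.
rewrite big_split /= rowP; under eq_bigr do rewrite !mxE.
by rewrite sumrN sumr_const card_ord mul1r polyC_natr.
Qed.

Section QuadraticForm.
Variables (R : realFieldType) (n : nat).
Implicit Types (M : 'M[R]_n) (v : 'rV[R]_n).

Definition qform M v : R := (v *m M *m v^T) 0 0.

Lemma qformE M v : qform M v = \sum_i \sum_j v 0 i * M i j * v 0 j.
Proof.
rewrite /qform mxE exchange_big /=; apply: eq_bigr => j _.
rewrite [(_ *m _) _ _]mxE big_distrl; apply: eq_bigr => i _.
by rewrite [v^T _ _]mxE.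
Qed.

Lemma qform1 v : qform 1%:M v = \sum_j v 0 j ^+ 2.
Proof. by rewrite /qform mulmx1 mxE; apply: eq_bigr => j _; rewrite mxE. Qed.

Lemma qform1_gt0 v : v != 0 -> 0 < qform 1%:M v.
Proof.
move=> v_neq0; rewrite qform1 lt_def sumr_ge0 ?andbT => [|j _]; last exact: sqr_ge0.
apply: contra v_neq0 => /eqP /psumr_eq0P v2_eq0; apply/eqP/rowP => j.
by rewrite mxE; apply/eqP; rewrite -sqrf_eq0 v2_eq0 // => k _; exact: sqr_ge0.
Qed.

Lemma qform_add_const1 M v :
  qform (M + const_mx 1) v = qform M v + (\sum_j v 0 j) ^+ 2.
Proof.
rewrite !qformE expr2 big_distrl -big_split /=; apply: eq_bigr => i _.
rewrite big_distrr -big_split /=; apply: eq_bigr => j _.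
by rewrite !mxE; ring.
Qed.

Lemma eigenvalue_qform M a : root (char_poly M) a ->
  exists2 v, v != 0 & qform M v = a * qform 1%:M v.
Proof.
rewrite -eigenvalue_root_char => /eigenvalueP [v vM v_neq0]; exists v => //.
by rewrite /qform vM mulmx1 -scalemxAl mxE.
Qed.

Lemma psd_char_poly_root_ge0 M a : (forall v, 0 <= qform M v) ->
  root (char_poly M) a -> 0 <= a.
Proof.
move=> psdM /eigenvalue_qform [v /qform1_gt0 v_gt0 vMv].
by have := psdM v; rewrite vMv pmulr_lge0.
Qed.

Lemma pd_char_poly_root0F M : (forall v, v != 0 -> 0 < qform M v) ->
  ~~ root (char_poly M) 0.
Proof.
move=> pdM; apply/negP => /eigenvalue_qform [v /pdM].
by rewrite mul0r => + vMv; rewrite vMv ltxx.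
Qed.

End QuadraticForm.

Section Laplacian.
Variables (R : realType) (N : nat) (adj : rel 'I_N).
Hypothesis adj_sym : forall i j, adj i j = adj j i.

Local Notation Lap := (laplacian R adj).
Local Notation w i j := ((adj i j)%:R : R).

Lemma degreeE i : (degree adj i)%:R = \sum_j w i j.
Proof.
rewrite /degree -sum1_card natr_sum big_mkcond /=.
apply: eq_bigr => j _; rewrite (_ : (j \in _) = adj i j); first by case: (adj i j).
by apply/idP/idP; rewrite in_setE.
Qed.

Lemma laplacian_row_sum i : \sum_j Lap i j = 0.
Proof.
under eq_bigr do rewrite mxE.
by rewrite sumrB -big_mkcond /= (big_pred1 i) // degreeE subrr.
Qed.

Lemma laplacian_qformE (v : 'rV[R]_N) :
  qform Lap v *+ 2 = \sum_i \sum_j w i j * (v 0 i - v 0 j) ^+ 2.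
Proof.
set S1 := \sum_i \sum_j w i j * v 0 i ^+ 2.
set S2 := \sum_i \sum_j w i j * (v 0 i * v 0 j).
have -> : qform Lap v = S1 - S2.
  rewrite qformE /S1 /S2 -sumrB; apply: eq_bigr => i _.
  under eq_bigr do rewrite mxE mulrBr mulrBl.
  rewrite sumrB (bigD1 i) //= eqxx big1 ?addr0 => [|j /negbTE ji]; last first.
    by rewrite eq_sym ji mulr0 mul0r.
  congr (_ - _); last by apply: eq_bigr => j _; ring.
  by rewrite degreeE big_distrr big_distrl /=; apply: eq_bigr => j _; ring.
have sym1 : \sum_i \sum_j w i j * v 0 j ^+ 2 = S1.
  rewrite exchange_big; apply: eq_bigr => i _.
  by apply: eq_bigr => j _; rewrite adj_sym.
rewrite mulr2n -{2}sym1 /S1 /S2 -!sumrB -big_split /=; apply: eq_bigr => i _.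
rewrite -!sumrB -big_split /=; apply: eq_bigr => j _; ring.
Qed.

Lemma laplacian_qform_ge0 (v : 'rV[R]_N) : 0 <= qform Lap v.
Proof.
have : 0 <= qform Lap v *+ 2.
  rewrite laplacian_qformE; apply: sumr_ge0 => i _; apply: sumr_ge0 => j _.
  by rewrite mulr_ge0 ?ler0n ?sqr_ge0.
by rewrite pmulrn_lge0.
Qed.

Lemma laplacian_qform_eq0 (v : 'rV[R]_N) i j :
  qform Lap v = 0 -> adj i j -> v 0 i = v 0 j.
Proof.
have term_ge0 k l : 0 <= w k l * (v 0 k - v 0 l) ^+ 2.
  by rewrite mulr_ge0 ?ler0n ?sqr_ge0.
have row_ge0 k : 0 <= \sum_l w k l * (v 0 k - v 0 l) ^+ 2.
  by apply: sumr_ge0 => l _; exact: term_ge0.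
move=> /(congr1 (fun x => x *+ 2)); rewrite mul0rn laplacian_qformE => sum0 aij.
have row_i0 := psumr_eq0P (fun k _ => row_ge0 k) sum0 (i := i) isT.
have := psumr_eq0P (fun l _ => term_ge0 i l) row_i0 (i := j) isT.
by rewrite aij mul1r => /eqP; rewrite sqrf_eq0 subr_eq0 => /eqP.
Qed.

Hypothesis adj_connected : connected_graph adj.

Lemma laplacian_qform_eq0_const (v : 'rV[R]_N) i j :
  qform Lap v = 0 -> v 0 i = v 0 j.
Proof.
move=> v0; have level_closed : closed adj [pred k | v 0 k == v 0 i].
  by move=> x y /(laplacian_qform_eq0 v0) vxy; rewrite !inE vxy.
have := closed_connect level_closed (adj_connected i j).
by rewrite !inE eqxx => /esym/eqP.
Qed.

Lemma laplacian_add_const1_pd (v : 'rV[R]_N) :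
  v != 0 -> 0 < qform (Lap + const_mx 1) v.
Proof.
have qv_ge0 := laplacian_qform_ge0 v.
move=> v_neq0; rewrite qform_add_const1 lt_def addr_ge0 ?sqr_ge0 // andbT.
apply: contra v_neq0; rewrite paddr_eq0 ?sqr_ge0 // sqrf_eq0 => /andP [/eqP qv0 sum0].
apply/eqP/rowP => j; rewrite mxE; move: sum0.
under eq_bigr => k _ do rewrite (laplacian_qform_eq0_const k j qv0).
have N_gt0 : (0 < N)%N := leq_ltn_trans (leq0n j) (ltn_ord j).
by rewrite sumr_const card_ord mulrn_eq0 (gtn_eqF N_gt0) => /eqP.
Qed.

End Laplacian.

Lemma laplacian_char_poly_neqX2 (R : realType) m (adj : rel 'I_m.+1) (q : {poly R}) :
  undirected_graph adj -> connected_graph adj ->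
  char_poly (laplacian R adj) != 'X * 'X * q.
Proof.
move=> [adj_sym _] adj_conn; apply/eqP => charL.
have [D [charLD charLJ]] := char_poly_row_sums0 (laplacian_row_sum R adj).
have DE : D = 'X * q.
  by apply: (mulIf (x := 'X)); rewrite ?polyX_eq0 // -charLD charL mulrAC.
have := pd_char_poly_root0F (laplacian_add_const1_pd (R := R) adj_sym adj_conn).
by rewrite charLJ DE /root !hornerE eqxx.
Qed.

Lemma gammaL_ge0_lt1 (R : realType) N (adj : rel 'I_N) : (1 < N)%N ->
  undirected_graph adj -> connected_graph adj -> 0 <= gammaL R adj < 1.
Proof.
case: N adj => [//|m] adj N_gt1 adj_undir adj_conn.
rewrite /gammaL /lambda_max /lambda2 /spectrum.
(* without a sorted factorization of char_poly, the spectrum is [::] and gammaL is 0 *)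
case: xgetP => [r _ [r_sorted charL] | _]; last by rewrite /= subrr mul0r lexx ltr01.
have r_ge0 x : x \in r -> 0 <= x.
  move=> xr; apply: (psd_char_poly_root_ge0 (laplacian_qform_ge0 (R := R) adj_undir.1)).
  by rewrite charL root_prod_XsubC.
have size_r : size r = m.+1.
  by have := size_char_poly (laplacian R adj); rewrite charL size_prod_XsubC => -[].
case: r r_sorted charL r_ge0 size_r => [//|r0 [|r1 rest]] r_sorted charL r_ge0 size_r.
  by move: N_gt1; rewrite -size_r.
have r01 : r0 <= r1 by case/andP: r_sorted.
have r1_gt0 : 0 < r1.
  rewrite lt_def r_ge0 ?andbT ?inE ?eqxx ?orbT //; apply/eqP => r1_0.
  have r0_0 : r0 = 0 by apply/le_anti; rewrite r_ge0 ?mem_head // -r1_0 r01.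
  have /eqP := laplacian_char_poly_neqX2 (\prod_(x <- rest) ('X - x%:P))
    adj_undir adj_conn.
  by rewrite charL !big_cons r0_0 r1_0 subr0 mulrA.
have r1_le_last : r1 <= last r1 rest.
  have := mem_last r1 rest; rewrite inE => /orP [/eqP -> //|].
  by move: r_sorted => /= /andP [_ /(order_path_min le_trans) /allP]; apply.
rewrite /= divr_ge0 ?subr_ge0 ?addr_ge0 ?(ltW r1_gt0) ?(le_trans (ltW r1_gt0)) //=.
by rewrite ltr_pdivrMr ?mul1r; lra.
Qed.

Section Exponent.
Variable R : realType.
Implicit Types (g a e : R) (L : nat).

Lemma ln_bound_mul_expn_lt1 g a L : 0 <= g < 1 -> 1 <= a ->
  ln a / ln g^-1 < L%:R -> a * g ^+ L < 1.
Proof.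
move=> /andP [g_ge0 g_lt1] a_ge1 L_bound.
(* ln 0 = 0 and x / 0 = 0, so for g = 0 the bound only says 0 < L *)
have [g0|g_neq0] := eqVneq g 0.
  move: L_bound; rewrite g0 invr0 (ln0 (lexx 0)) invr0 mulr0 ltr0n expr0n.
  by case: L => // L _; rewrite mulr0 ltr01.
have g_gt0 : 0 < g by rewrite lt_def g_neq0.
rewrite lnV ?posrE // ltr_pdivrMr ?oppr_gt0 ?ln_lt0 ?g_gt0 // in L_bound.
have a_gt0 : 0 < a := lt_le_trans ltr01 a_ge1.
rewrite -ltr_ln ?posrE ?mulr_gt0 ?exprn_gt0 // ln1 lnM ?posrE ?exprn_gt0 //.
by rewrite lnXn // -mulr_natr; lra.
Qed.

Lemma exists_expn_ln_bound g a e : 0 <= g < 1 -> 0 < e ->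
  exists L, ln a / ln g^-1 < L%:R /\ g ^+ L <= e.
Proof.
move=> /andP [g_ge0 g_lt1] e_gt0.
have [->|g_neq0] := eqVneq g 0.
  by exists 1%N; rewrite invr0 (ln0 (lexx 0)) invr0 mulr0 ltr01 expr1 ltW.
have g_gt0 : 0 < g by rewrite lt_def g_neq0.
have lng_lt0 : ln g < 0 by rewrite ln_lt0 ?g_gt0.
set x := Num.max (ln a / ln g^-1) (ln e / ln g).
exists (Num.truncn x).+1; have x_lt := truncnS_gt x.
split; first by apply: le_lt_trans x_lt; rewrite le_max lexx.
rewrite -ler_ln ?posrE ?exprn_gt0 // lnXn // -mulr_natr mulrC -ler_ndivrMr //.
by apply/ltW/le_lt_trans/x_lt; rewrite le_max lexx orbT.
Qed.

End Exponent.

Section Margin.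
Variables (R : realType) (N s : nat) (g a beta : R) (L : nat) (bw bv lam : R).

Local Notation p := (p0 N g a beta L).

Lemma p0_ge0 : 0 <= beta -> 0 <= g -> a * g ^+ L <= 1 -> 0 <= p.
Proof.
move=> beta_ge0 g_ge0 agL_le1.
by rewrite /p0 divr_ge0 ?subr_ge0 // !mulr_ge0 ?sqrtr_ge0 ?exprn_ge0.
Qed.

Lemma mul_p0_le (d : R) : 0 <= beta -> 0 <= g -> g ^+ L <= 1 / 4 ->
  g ^+ L * (4 * Num.sqrt N%:R) <= d -> 0 <= a <= 2 -> a * p <= beta * d.
Proof.
move=> beta_ge0 g_ge0 gL_le gL_le_d /andP [a_ge0 a_le2].
have gL_ge0 : 0 <= g ^+ L := exprn_ge0 L g_ge0.
have sqrtN_ge0 : 0 <= Num.sqrt N%:R :> R := sqrtr_ge0 _.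
have den_ge : 1 / 2 <= 1 - a * g ^+ L by nra.
have num_ge0 : 0 <= Num.sqrt N%:R * beta * g ^+ L by rewrite !mulr_ge0.
have p_le : p <= 2 * (Num.sqrt N%:R * beta * g ^+ L).
  by rewrite /p0 ler_pdivrMr; [nra | lra].
have : 0 <= p by rewrite p0_ge0 //; nra.
nra.
Qed.

Lemma Ffun_margin_lt_q0 (eta : R) :
  (0 < N)%N -> (s <= N)%N -> 0 <= bw -> 0 <= bv -> lam <= s%:R -> 1 < a ->
  0 <= p -> 0 < beta -> 0 < eta ->
  eta * (1 - Ffun N g a beta L bw bv lam eta) < q0 N s g a beta L bw bv.
Proof.
move=> N_gt0 s_le_N bw_ge0 bv_ge0 lam_le_s a_gt1 p_ge0 beta_gt0 eta_gt0.
set k := kstar N g a beta L bw bv eta.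
set D := a * (p + eta) + bw + bv.
have D_gt0 : 0 < D by rewrite /D; nra.
have k_ge0 : 0 <= k by rewrite /k /kstar le_min ler01 divr_ge0 ?ltW.
have k_le : k * D <= beta by rewrite -ler_pdivlMr // /k /kstar ge_min lexx orbT.
have kl_le : a * eta * k * lam <= beta * s%:R.
  have : a * eta * k <= beta.
    have kD : k * D = a * eta * k + k * (a * p + bw + bv) by rewrite /D; ring.
    have : 0 <= k * (a * p + bw + bv).
      by rewrite mulr_ge0 // !addr_ge0 // mulr_ge0 //; lra.
    lra.
  have : 0 <= a * eta * k by rewrite !mulr_ge0 //; lra.
  have : 0 <= s%:R :> R := ler0n _ _.
  case: (lerP 0 lam); nra.
have N_pos : 0 < N%:R :> R by rewrite ltr0n.
have s_le : s%:R <= N%:R :> R by rewrite ler_nat.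
have rest_ge0 : 0 <= (N%:R - s%:R) / N%:R * (bw + bv + a * p) + bw.
  by rewrite addr_ge0 // mulr_ge0 ?divr_ge0 ?subr_ge0 //; nra.
have -> : eta * (1 - Ffun N g a beta L bw bv lam eta) =
          eta * (1 - a) + a * eta * k * lam / N%:R.
  by rewrite /Ffun -/k; field; rewrite gt_eqF.
rewrite /q0 -/p; have : a * eta * k * lam / N%:R <= s%:R * beta / N%:R.
  by rewrite ler_pM2r ?invr_gt0 // [s%:R * _]mulrC.
nra.
Qed.

Lemma q0_le_Ffun_margin :
  let t := (lam - s%:R) / N%:R in
  let eta := (beta - a * p - bw - bv) / a in
  (0 < N)%N -> 0 <= bw -> 0 <= bv -> 0 < t -> 1 <= a <= 1 + t / 2 ->
  4 * ((bw + bv) * (t + 1) + bw) + t <= beta * t ->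
  0 <= p -> a * p <= beta * (t / (4 * (t + 1))) ->
  0 < eta /\ q0 N s g a beta L bw bv <= eta * (1 - Ffun N g a beta L bw bv lam eta).
Proof.
move=> t eta N_gt0 bw_ge0 bv_ge0 t_gt0 /andP [a_ge1 a_le] beta_large p_ge0 ap_le.
have N_pos : 0 < N%:R :> R by rewrite ltr0n.
have a_gt0 : 0 < a by lra.
have beta_ge : 4 * (bw + bv) + 1 <= beta by rewrite -(ler_pM2r t_gt0); lra.
have apt_le : a * p * (t + 1) <= beta * t / 4.
  have -> : beta * t / 4 = beta * (t / (4 * (t + 1))) * (t + 1) by field; lra.
  by rewrite ler_pM2r //; lra.
have eta_gt0 : 0 < eta by rewrite /eta divr_gt0 //; nra.
have eta_le : eta <= beta by rewrite /eta ler_pdivrMr //; nra.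
have kstar1 : kstar N g a beta L bw bv eta = 1.
  rewrite /kstar.
  have -> : a * (p + eta) + bw + bv = beta.
    by rewrite /eta; field; rewrite gt_eqF.
  by rewrite divff ?gt_eqF ?minxx //; lra.
split => //; rewrite -subr_ge0 /Ffun kstar1.
have -> : eta * (1 - a * (1 - 1 / N%:R * lam)) - q0 N s g a beta L bw bv =
          eta * (1 - a) + beta * t - (a * p + bw + bv) * (t + 1) - bw.
  by rewrite /q0 /t /eta; field; rewrite !gt_eqF.
have : eta * (a - 1) <= beta * (t / 2) by nra.
nra.
Qed.

End Margin.

Definition feasible_design (R : realType) (N s : nat) (g lam bw bv a : R) : Prop :=
  exists beta eta0 : R, exists L : nat,
    [/\ 0 < beta, 0 < eta0, ln a / ln g^-1 < L%:R &
        q0 N s g a beta L bw bv <= eta0 * (1 - Ffun N g a beta L bw bv lam eta0)].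

Lemma feasible_design_gt_s (R : realType) (N s : nat) (g lam bw bv a : R) :
  (0 < N)%N -> (s <= N)%N -> 0 <= bw -> 0 <= bv -> 0 <= g < 1 -> 1 < a ->
  feasible_design N s g lam bw bv a -> s%:R < lam.
Proof.
move=> N_gt0 s_le_N bw_ge0 bv_ge0 g_range a_gt1.
case=> beta [eta [L [beta_gt0 eta_gt0 L_bound]]].
apply: contraLR; rewrite -leNgt -ltNge.
have agL_lt1 := ln_bound_mul_expn_lt1 g_range (ltW a_gt1) L_bound.
have g_ge0 : 0 <= g by case/andP: g_range.
by move=> lam_le_s; apply: Ffun_margin_lt_q0 => //; apply: p0_ge0 => //; apply: ltW.
Qed.

Lemma gt_s_feasible_design (R : realType) (N s : nat) (g lam bw bv a : R) :
  (0 < N)%N -> 0 <= bw -> 0 <= bv -> 0 <= g < 1 -> s%:R < lam ->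
  1 <= a < 1 + Num.min 1 ((lam - s%:R) / N%:R / 2) ->
  feasible_design N s g lam bw bv a.
Proof.
move=> N_gt0 bw_ge0 bv_ge0 g_range s_lt_lam.
have g_ge0 : 0 <= g by case/andP: g_range.
set t := (lam - s%:R) / N%:R.
have t_gt0 : 0 < t by rewrite divr_gt0 ?subr_gt0 ?ltr0n.
rewrite -ltrBlDl lt_min => /andP [a_ge1 /andP [a_lt2 a_le]].
set beta := (4 * ((bw + bv) * (t + 1) + bw) + t) / t.
have beta_large : 4 * ((bw + bv) * (t + 1) + bw) + t <= beta * t.
  by rewrite divfK ?gt_eqF.
have beta_gt0 : 0 < beta.
  have : 0 <= (bw + bv) * (t + 1) by apply: mulr_ge0; lra.
  by move=> ?; rewrite /beta divr_gt0 //; lra.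
set d := t / (4 * (t + 1)).
have d_gt0 : 0 < d by apply: divr_gt0 => //; apply: mulr_gt0 => //; lra.
have sqrtN_gt0 : 0 < Num.sqrt N%:R :> R by rewrite sqrtr_gt0 ltr0n.
have [|L [L_bound]] := exists_expn_ln_bound a g_range
  (e := Num.min (1 / 4) (d / (4 * Num.sqrt N%:R))).
  by rewrite lt_min; apply/andP; split; apply: divr_gt0 => //; apply: mulr_gt0.
rewrite le_min => /andP [gL_le]; rewrite ler_pdivlMr ?mulr_gt0 // => gL_le_d.
have p_ge0 : 0 <= p0 N g a beta L.
  apply: p0_ge0 => //; [exact: ltW | exact/ltW/(ln_bound_mul_expn_lt1 g_range)].
have ap_le : a * p0 N g a beta L <= beta * d.
  by apply: (mul_p0_le (ltW beta_gt0) g_ge0 gL_le gL_le_d); apply/andP; split; lra.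
have [|eta_gt0 ineq] :=
  q0_le_Ffun_margin N_gt0 bw_ge0 bv_ge0 t_gt0 _ beta_large p_ge0 ap_le.
  by rewrite -/t; apply/andP; split; lra.
by exists beta, ((beta - a * p0 N g a beta L - bw - bv) / a), L.
Qed.

Section Norms.
Variable R : realType.

Lemma enormZ m k (c : R) (x : 'M[R]_(m, k)) : enorm (c *: x) = `|c| * enorm x.
Proof.
rewrite /enorm -sqrtr_sqr -sqrtrM ?sqr_ge0 // big_distrr; congr Num.sqrt.
by apply: eq_bigr => i _; rewrite big_distrr; apply: eq_bigr => j _; rewrite mxE exprMn.
Qed.

Lemma enorm_tr m k (x : 'M[R]_(m, k)) : enorm x^T = enorm x.
Proof.
rewrite /enorm exchange_big; congr Num.sqrt.
by apply: eq_bigr => i _; apply: eq_bigr => j _; rewrite mxE.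
Qed.

Lemma opnorm_scalar n (c : R) : 0 <= c -> (exists x : 'cV[R]_n, enorm x = 1) ->
  opnorm (c%:M : 'M[R]_n) = c.
Proof.
move=> c_ge0 [x0 x0_unit]; rewrite /opnorm -[RHS](sup1 c); congr sup.
have cx x : enorm (c%:M *m x) = c * enorm x by rewrite mul_scalar_mx enormZ ger0_norm.
apply/seteqP; split => y /=; first by case=> x /= x_unit <-; rewrite cx x_unit mulr1.
by move=> ->; exists x0; rewrite // cx x0_unit mulr1.
Qed.

End Norms.

Theorem theorem2 (R : realType) (n N : nat) (adj : rel 'I_N)
  (C : 'I_N -> 'rV[R]_n) (s : nat) (bw bv : R) :
  (1 < N)%N ->
  undirected_graph adj -> connected_graph adj ->
  (forall i, enorm (C i) = 1) ->
  (s <= N)%N ->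
  0 <= bw -> 0 <= bv ->
  (exists2 eps : R, 0 < eps &
     forall A : 'M[R]_n, 1 <= opnorm A < 1 + eps ->
       exists beta : R, exists eta0 : R, exists L : nat,
         [/\ 0 < beta, 0 < eta0,
             ln (opnorm A) / ln ((gammaL R adj)^-1) < L%:R &
             q0 N s (gammaL R adj) (opnorm A) beta L bw bv <=
             eta0 * (1 - Ffun N (gammaL R adj) (opnorm A) beta L bw bv
                                (lambda0 s C) eta0)])
  <-> s%:R < lambda0 s C.
Proof.
move=> N_gt1 adj_undir adj_conn C_unit s_le_N bw_ge0 bv_ge0.
have N_gt0 : (0 < N)%N := ltnW N_gt1.
have g_range := gammaL_ge0_lt1 R N_gt1 adj_undir adj_conn.
split=> [[eps eps_gt0 feasible]|s_lt_lam].
  have opnorm_a : opnorm ((1 + eps / 2)%:M : 'M[R]_n) = 1 + eps / 2.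
    apply: opnorm_scalar; first lra.
    by exists (C (Ordinal N_gt0))^T; rewrite enorm_tr.
  apply: (feasible_design_gt_s N_gt0 s_le_N bw_ge0 bv_ge0 g_range (a := 1 + eps / 2)).
    lra.
  rewrite -opnorm_a; apply: feasible; rewrite opnorm_a; apply/andP; split; lra.
exists (Num.min 1 ((lambda0 s C - s%:R) / N%:R / 2)).
  by rewrite lt_min ltr01 !divr_gt0 ?subr_gt0 ?ltr0n.
by move=> A; apply: gt_s_feasible_design.
Qed.
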